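(* There is a choice of the sample size $\ell=O(\log n)$ such that, for any weighted stream of $n$ updates, the Reduce-By-Sample-Median algorithm (defined in the context) with $k$ counters and sample size $\ell$ can be implemented to run in amortized constant time per stream update with probability at least $1-1/n$ (over the algorithm's random sampling), assuming counters are stored in a hash table supporting insertions, deletions and lookups in amortized $O(1)$ time and enumeration of all counters in $O(k)$ time.
   Context: A weighted stream over the universe $[m]=\{1,\dots,m\}$ is a sequence of updates $(i_1,\Delta_1),\dots,(i_n,\Delta_n)$ with $i_t\in[m]$ and real weights $\Delta_t>0$. The Reduce-By-Sample-Median algorithm with parameters $k\ge 1$ (number of counters) and $\ell\ge 1$ (sample size) maintains a set $T\subseteq[m]$ of at most $k$ items, each $j\in T$ carrying a nonnegative real counter $c(j)$; initially $T=\emptyset$. Update$(i,\Delta)$: if $i\in T$, set $c(i)\gets c(i)+\Delta$; else if $|T|<k$, add $i$ to $T$ with $c(i)=\Delta$; else call DecrementCounters(), and afterwards, if $\Delta\ge c^*$, add $i$ to $T$ with $c(i)=\Delta-c^*$. DecrementCounters(): sample $\ell$ counters uniformly at random from $T$ (fresh randomness in each call) and let $c^*$ be the median of the sampled counter values; for every $j\in T$ set $c(j)\gets c(j)-c^*$, and remove $j$ from $T$ if now $c(j)\le 0$. Estimate$(i)$ returns $c(i)$ if $i\in T$ and $0$ otherwise. *)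

From mathcomp Require Import all_boot all_order all_algebra.
Set Implicit Arguments. Unset Strict Implicit. Unset Printing Implicit Defensive.
Import Order.TTheory GRing.Theory Num.Theory.
Local Open Scope ring_scope.

(* Items are natural numbers (the universe [m] embeds in nat); weights are in
   an arbitrary real field R. *)
Section RBSM.
Variables (R : realFieldType) (k l : nat).

(* The set T with its counters, as a list of (item, counter) pairs
   (items pairwise distinct by construction). *)
Definition rstate := seq (nat * R).

(* Median of a sample: the element of index (size s)/2 (0-based) of the
   sorted sample; the exact median when the sample size is odd. *)
Definition smedian (s : seq R) : R := nth 0 (sort <=%R s) (size s)./2.

Definition decrement (T : rstate) (cs : R) : rstate :=
  [seq (p.1, p.2 - cs) | p <- T & cs < p.2].

(* One Update(i, d).  [smp] are the l sampled positions (uniform in 'I_k, with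
   replacement) used if DecrementCounters is called (then |T| = k).
   Returns the new state and the cost of the update in the model:
   1 for a hash-table lookup/insert/increment; k + l + 1 when
   DecrementCounters is called (O(k) enumeration of counters, O(l) sampling
   and linear-time median selection, plus O(1)). *)
Definition rbsm_update (T : rstate) (u : nat * R) (smp : {ffun 'I_l -> 'I_k})
  : rstate * nat :=
  let: (i, d) := u in
  if i \in map fst T then
    ([seq if p.1 == i then (p.1, p.2 + d) else p | p <- T], 1%N)
  else if (size T < k)%N then (rcons T (i, d), 1%N)
  else
    let cs := smedian [seq (nth (0%N, 0) T (val (smp j))).2 | j <- enum 'I_l] in
    let T' := decrement T cs in
    ((if cs <= d then rcons T' (i, d - cs) else T'), (k + l + 1)%N).

Definition rbsm_run n (str : 'I_n -> nat * R)
  (om : {ffun 'I_n -> {ffun 'I_l -> 'I_k}}) : rstate * nat :=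
  foldl (fun (acc : rstate * nat) t =>
           let r := rbsm_update acc.1 (str t) (om t) in (r.1, (acc.2 + r.2)%N))
        ([::], 0%N) (enum 'I_n).

Definition rbsm_cost n (str : 'I_n -> nat * R) (om : {ffun 'I_n -> {ffun 'I_l -> 'I_k}}) : nat := (rbsm_run str om).2.

Definition prob_cost_le (C n : nat) (str : 'I_n -> nat * R) : R :=
  (#|[set om : {ffun 'I_n -> {ffun 'I_l -> 'I_k}} | (rbsm_cost str om <= C * n)%N]|%:R
   / #|{: {ffun 'I_n -> {ffun 'I_l -> 'I_k}}}|%:R).

End RBSM.

(* A DecrementCounters call is good if at least k/8 counters are at most the
   sampled median c*: those counters are all removed, so the potential 8|T|,
   which grows by at most 8 per update, drops by k, and there are at most 8n/k
   good calls.  A call is bad only if more than half of the l samples fall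
   among the k/8 smallest counters, which has probability at most 2^(-l/2)
   whatever happened before; a union bound over the sets of n/k + 1 updates
   shows that more than n/k bad calls occur with probability at most
   C(n, n/k + 1) 2^(-(l/2)(n/k + 1)) <= 1/n when l = min(6k, 8(log n + 1)).
   Otherwise, as a call costs k + l + 1 <= 7k + 1, the total cost is at most
   n + 7k (8n/k + n/k) = 64n. *)

From mathcomp Require Import all_boot all_order all_algebra zify.
Set Warnings "-notation-overridden,-ambiguous-paths".

Set Implicit Arguments. Unset Strict Implicit. Unset Printing Implicit Defensive.
Import Order.TTheory GRing.Theory Num.Theory.

Lemma count_enum (T : finType) (P : pred T) : count P (enum T) = #|[set x | P x]|.
Proof. by rewrite cardsE cardE enumT /enum_mem size_filter. Qed.

Lemma card_prefix_le_count (T : eqType) (x0 : T) (s : seq T) (P : pred T) k :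
  k <= size s -> #|[set j : 'I_k | P (nth x0 s j)]| <= count P s.
Proof.
move=> ks; rewrite -count_enum.
have -> : count (fun j : 'I_k => P (nth x0 s j)) (enum 'I_k) = count P (take k s).
  by rewrite -(map_nth_iota0 x0 ks) -val_enum_ord -map_comp count_map.
by rewrite -{2}(cat_take_drop k s) count_cat leq_addr.
Qed.

Lemma take_enum_ordS n t (tn : t < n) :
  take t.+1 (enum 'I_n) = rcons (take t (enum 'I_n)) (Ordinal tn).
Proof.
rewrite (take_nth (Ordinal tn)) ?size_enum_ord //; congr rcons.
by apply: val_inj; rewrite /= nth_enum_ord.
Qed.

Lemma bin_le_expn n m : 'C(n, m) <= n ^ m.
Proof.
apply: leq_trans (leq_pmulr _ (fact_gt0 m)) _; rewrite bin_ffact.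
by elim: m => // m IH; rewrite ffactnSr expnSr leq_mul ?leq_subr.
Qed.

Lemma bin_le_exp2 n m : 'C(n, m) <= 2 ^ n.
Proof.
rewrite -{1}(card_ord n) -card_draws -[n in 2 ^ n](card_ord n) -cardsT.
by rewrite -card_powerset powersetT subset_leq_card ?subsetT.
Qed.

Section FfunUpdate.
Variables (n : nat) (X : finType).
Notation Omega := {ffun 'I_n -> X}.

Definition ffun_upd (om : Omega) (t : 'I_n) (x : X) : Omega :=
  [ffun i => if i == t then x else om i].

Lemma ffun_upd_eq om t x : ffun_upd om t x t = x.
Proof. by rewrite ffunE eqxx. Qed.

Lemma ffun_upd_neq om t x i : i != t -> ffun_upd om t x i = om i.
Proof. by rewrite ffunE => /negPf ->. Qed.

Lemma sum_ffun_upd t (g : Omega -> nat) :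
  \sum_om \sum_(x : X) g (ffun_upd om t x) = #|X| * \sum_om g om.
Proof.
pose swap (p : Omega * X) := (ffun_upd p.1 t p.2, p.1 t).
have upd_swap p : ffun_upd (swap p).1 t (swap p).2 = p.1.
  by apply/ffunP => i; rewrite !ffunE; case: eqP => // ->.
have swapK : involutive swap.
  by move=> [om x]; rewrite {1}/swap upd_swap ffun_upd_eq.
transitivity (\sum_om \sum_(x : X) g om); last first.
  by rewrite big_distrr; apply: eq_bigr => om _; rewrite sum_nat_const /= mulnC.
rewrite pair_big [RHS]pair_big (reindex_inj (inv_inj swapK)).
by apply: eq_bigr => p _; rewrite upd_swap.
Qed.

(* Double counting over the lines {ffun_upd om t x | x : X}, on each of which
   G is constant and B has density at most 1/a. *)
Lemma card_sparse_fibers a t (G B : pred Omega) :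
  (forall om x, G (ffun_upd om t x) = G om) ->
  (forall om, a * #|[set x | B (ffun_upd om t x)]| <= #|X|) ->
  a * #|[set om | G om && B om]| <= #|[set om | G om]|.
Proof.
move=> G_upd B_sparse.
have [X0 | X_gt0] := posnP #|X|.
  suff -> : #|[set om | G om && B om]| = 0 by rewrite muln0.
  by apply: eq_card0 => om; have := card0_eq X0 (om t).
rewrite -(leq_pmul2l X_gt0) mulnCA.
have -> : #|X| * #|[set om | G om && B om]| =
          \sum_om G om * #|[set x | B (ffun_upd om t x)]|.
  rewrite -sum1dep_card big_mkcond /= -(sum_ffun_upd t).
  apply: congr_big => // om _.
  rewrite -sum1dep_card big_distrr [RHS]big_mkcond; apply: eq_bigr => x _ /=.
  by rewrite G_upd; case: (G om); case: (B _).
rewrite -[#|[set om | G om]|]sum1dep_card !big_distrr [leqRHS]big_mkcond /=.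
apply: leq_sum => om _.
by case: (G om); rewrite ?muln0 // mul1n muln1.
Qed.

End FfunUpdate.

Section AdaptedEvents.
Variables (n : nat) (X : finType) (a : nat).
Variable bad : 'I_n -> pred {ffun 'I_n -> X}.
(* Counting form of: bad t is determined by the first t + 1 coordinates and
   has conditional probability at most 1/a given all the others. *)
Hypothesis bad_adapted : forall (t : 'I_n) (om om' : {ffun 'I_n -> X}),
  (forall i : 'I_n, i <= t -> om i = om' i) -> bad t om = bad t om'.
Hypothesis bad_sparse : forall t om,
  a * #|[set x | bad t (ffun_upd om t x)]| <= #|X|.

Lemma card_bad_on (S : {set 'I_n}) :
  a ^ #|S| * #|[set om | [forall t in S, bad t om]]| <= #|{ffun 'I_n -> X}|.
Proof.
elim: {S}#|S| {-2}S (erefl #|S|) => [|N IH] S cardS.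
  by rewrite cardS mul1n max_card.
have [t0 t0S] : {t0 | t0 \in S} by apply/sigW/set0Pn; rewrite -card_gt0 cardS.
have [t tS t_last] := arg_maxnP val t0S; have {}tS : t \in S := tS.
have cardSt : #|S :\ t| = N by move: cardS; rewrite (cardsD1 t) tS => -[].
pose G om := [forall u in S :\ t, bad u om].
have G_upd om x : G (ffun_upd om t x) = G om.
  apply: eq_forallb_in => u /setD1P[ut uS]; apply: bad_adapted => i iu.
  apply: ffun_upd_neq; apply: contraTneq iu => ->.
  by rewrite -ltnNge ltn_neqAle val_eqE ut; apply: t_last.
have -> : [set om | [forall u in S, bad u om]] = [set om | G om && bad t om].
  apply/setP => om; rewrite !inE.
  apply/forall_inP/andP => [all_bad | [/forall_inP G_om bad_t] u uS].
    by split; [apply/forall_inP => u /setD1P[_ /all_bad] | apply: all_bad].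
  by have [-> // | ut] := eqVneq u t; apply: G_om; rewrite !inE ut.
rewrite cardS expnSr -mulnA -cardSt; apply: leq_trans (IH _ cardSt).
by rewrite leq_mul2l; apply/orP; right; apply: card_sparse_fibers.
Qed.

Lemma card_many_bad m :
  a ^ m * #|[set om | m <= #|[set t | bad t om]|]| <= 'C(n, m) * #|{ffun 'I_n -> X}|.
Proof.
pose Q om := [set t | bad t om].
have union_bound : #|[set om | m <= #|Q om|]| <=
    \sum_(S : {set 'I_n} | #|S| == m) #|[set om | [forall t in S, bad t om]]|.
  rewrite -sum1dep_card.
  under [leqRHS]eq_bigr => S _ do rewrite -sum1dep_card.
  rewrite (exchange_big_dep xpredT) //= big_mkcond; apply: leq_sum => om _.
  case: ifP => // m_le.
  have -> : \sum_(S : {set 'I_n} | (#|S| == m) && [forall t in S, bad t om]) 1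
            = 'C(#|Q om|, m).
    rewrite -cards_draws sum1dep_card; apply: eq_card => S; rewrite !inE andbC.
    by congr andb; apply/forall_inP/subsetP => all_bad t /all_bad; rewrite inE.
  by rewrite bin_gt0.
apply: leq_trans (leq_mul (leqnn _) union_bound) _.
rewrite big_distrr -[n in 'C(n, m)](card_ord n) -card_draws -sum1dep_card big_distrl /=.
by apply: leq_sum => S /eqP <-; rewrite mul1n card_bad_on.
Qed.

End AdaptedEvents.

Lemma card_majority_in (X : finType) (B : {set X}) l :
  8 * #|B| <= #|X| ->
  2 ^ l./2 * #|[set x : {ffun 'I_l -> X} | l./2 < #|[set j | x j \in B]|]| <= #|X| ^ l.
Proof.
move=> B_sparse.
have B_upd j (x : {ffun 'I_l -> X}) : 8 * #|[set y | ffun_upd x j y j \in B]| <= #|X|.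
  by apply: leq_trans B_sparse; rewrite leq_mul2l; apply/orP; right;
     apply: subset_leq_card; apply/subsetP => y; rewrite !inE ffun_upd_eq.
have B_adapted (j : 'I_l) (x y : {ffun 'I_l -> X}) :
    (forall i : 'I_l, i <= j -> x i = y i) -> (x j \in B) = (y j \in B).
  by move=> xy; rewrite xy.
have := card_many_bad B_adapted B_upd l./2.+1.
rewrite card_ffun card_ord => many_bound.
have exp_le : 2 ^ l./2 * 2 ^ l <= 8 ^ l./2.+1.
  rewrite -expnD (_ : 8 = 2 ^ 3) // -expnM leq_exp2l //.
  by have := odd_double_half l; lia.
rewrite -(@leq_pmul2l (8 ^ l./2.+1)) ?expn_gt0 // mulnCA.
apply: leq_trans (leq_mul (leqnn _) many_bound) _.
rewrite mulnA leq_mul2r; apply/orP; right; apply: leq_trans exp_le.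
by rewrite leq_mul2l bin_le_exp2 orbT.
Qed.

Local Open Scope ring_scope.

Lemma count_le_smedian (R : realFieldType) (s : seq R) : (0 < size s)%N ->
  ((size s)./2 < count (fun y => (y <= smedian s)%R) s)%N.
Proof.
move=> s_gt0.
have h_lt : ((size s)./2 < size (sort <=%R s))%N.
  by rewrite size_sort ltn_half_double -addnn -[X in (X < _)%N]addn0 ltn_add2l.
set h := (size s)./2 in h_lt *; set ss := sort <=%R s in h_lt *.
rewrite -(permP (permEl (perm_sort <=%R s))) -/ss -(cat_take_drop h.+1 ss) count_cat.
apply: leq_trans (leq_addr _ _).
have : all (fun y => y <= smedian s) (take h.+1 ss).
  apply/(all_nthP 0) => i; rewrite size_takel // => i_le.
  rewrite nth_take // /smedian -/ss -/h.
  apply: (sorted_leq_nth le_trans lexx 0 (sort_sorted le_total s)); rewrite ?inE //.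
  exact: leq_ltn_trans h_lt.
by rewrite all_count => /eqP ->; rewrite size_takel.
Qed.

Section LowMedian.
Variables (R : realFieldType) (k l : nat) (v : 'I_k -> R).

Definition sample_median (x : {ffun 'I_l -> 'I_k}) : R :=
  smedian [seq v (x j) | j <- enum 'I_l].

Definition low (c : R) : bool := (8 * #|[set i | (v i <= c)%R]| < k)%N.

Lemma low_le c c' : c <= c' -> low c' -> low c.
Proof.
move=> le_cc'; apply: leq_ltn_trans; rewrite leq_mul2l subset_leq_card ?orbT //.
by apply/subsetP => i; rewrite !inE => /le_trans; apply.
Qed.

Lemma card_low_le : (8 * #|[set i | low (v i)]| <= k)%N.
Proof.
have [-> | [i0]] := set_0Vmem [set i | low (v i)]; first by rewrite cards0.
rewrite inE => i0_low.
have [i i_low i_max] := arg_maxP (P := fun j => low (v j)) v i0_low.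
apply: leq_trans (ltnW i_low); rewrite leq_mul2l subset_leq_card ?orbT //.
by apply/subsetP => j; rewrite !inE => /i_max.
Qed.

Lemma low_sample_median_majority x : (0 < l)%N -> low (sample_median x) ->
  (l./2 < #|[set j | x j \in [set i | low (v i)]]|)%N.
Proof.
move=> l_gt0 low_med.
have := @count_le_smedian _ [seq v (x j) | j <- enum 'I_l].
rewrite size_map size_enum_ord count_map => /(_ l_gt0) /leq_trans; apply.
rewrite count_enum subset_leq_card //; apply/subsetP => j; rewrite !inE.
by move=> /low_le; apply.
Qed.

Lemma card_low_sample_median : (0 < l)%N ->
  (2 ^ l./2 * #|[set x | low (sample_median x)]| <= k ^ l)%N.
Proof.
move=> l_gt0.
have := @card_majority_in _ [set i | low (v i)] l; rewrite card_ord => /(_ card_low_le).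
apply: leq_trans; rewrite leq_mul2l subset_leq_card ?orbT //.
by apply/subsetP => x; rewrite !inE; apply: low_sample_median_majority.
Qed.

End LowMedian.

Section Update.
Variables (R : realFieldType) (k l : nat).
Implicit Types (T : rstate R) (x : {ffun 'I_l -> 'I_k}).

Definition counter T (j : 'I_k) : R := (nth (0%N, 0) T j).2.

Definition decrements T (i : nat) : bool := (i \notin map fst T) && (k <= size T)%N.

Definition good_decrement T i x :=
  decrements T i && ~~ low (counter T) (sample_median (counter T) x).

Definition bad_decrement T i x :=
  decrements T i && low (counter T) (sample_median (counter T) x).

Lemma rbsm_update_cost T i d x : (rbsm_update T (i, d) x).2 =
  (1 + (k + l) * (good_decrement T i x + bad_decrement T i x))%N.
Proof.
rewrite /good_decrement /bad_decrement /decrements /rbsm_update.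
case: ifP => _; first by rewrite muln0.
case: ltnP => _ /=; first by rewrite muln0.
by case: low; rewrite ?addn0 ?add0n addnC muln1.
Qed.

Lemma size_rbsm_update T i d x : (size (rbsm_update T (i, d) x).1 <= (size T).+1)%N.
Proof.
rewrite /rbsm_update; case: ifP => _; first by rewrite size_map.
case: ifP => _; first by rewrite size_rcons.
have size_dec c : (size (decrement T c) <= size T)%N.
  by rewrite size_map size_filter count_size.
by case: ifP => _ /=; [rewrite size_rcons ltnS | apply: leqW].
Qed.

Lemma size_rbsm_update_decrement T i d x (c := sample_median (counter T) x) :
  decrements T i ->
  (size (rbsm_update T (i, d) x).1 + count (fun p => (p.2 <= c)%R) T <= (size T).+1)%N.
Proof.
rewrite /rbsm_update /decrements leqNgt => /andP[/negPf -> /negPf ->] /=.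
have size_dec : (size (decrement T c) + count (fun p => (p.2 <= c)%R) T)%N = size T.
  rewrite size_map size_filter -(count_predC (fun p => c < p.2)).
  by congr addn; apply: eq_count => p /=; rewrite leNgt.
by rewrite -[smedian _]/c; case: ifP => _; rewrite ?size_rcons ?addSn size_dec.
Qed.

(* A good decrement removes the at least k/8 counters that are at most c*. *)
Lemma rbsm_update_potential T i d x :
  (k * good_decrement T i x + 8 * size (rbsm_update T (i, d) x).1 <= 8 * (size T).+1)%N.
Proof.
have size_le := size_rbsm_update T i d x.
set T' := (rbsm_update T (i, d) x).1 in size_le *.
rewrite /good_decrement; have [dec|_] /= := boolP (decrements T i); last by lia.
have size_dec_le := size_rbsm_update_decrement d x dec; rewrite -/T' in size_dec_le.
set c := sample_median _ x in size_dec_le *.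
have [_ | not_low] /= := boolP (low _ c); first by lia.
have k_le : (k <= 8 * count (fun p => (p.2 <= c)%R) T)%N.
  move: not_low; rewrite /low -leqNgt => /leq_trans; apply.
  by rewrite leq_mul2l card_prefix_le_count ?orbT //; case/andP: dec.
lia.
Qed.

End Update.

Section Run.
Variables (R : realFieldType) (k l n : nat) (str : 'I_n -> nat * R).
Notation Omega := {ffun 'I_n -> {ffun 'I_l -> 'I_k}}.
Implicit Types (om : Omega).

Definition rbsm_step om (acc : rstate R * nat) (t : 'I_n) : rstate R * nat :=
  let r := rbsm_update acc.1 (str t) (om t) in (r.1, (acc.2 + r.2)%N).

Definition rbsm_prefix om (t : nat) : rstate R * nat :=
  foldl (rbsm_step om) ([::], 0%N) (take t (enum 'I_n)).

Lemma rbsm_cost_prefix om : rbsm_cost str om = (rbsm_prefix om n).2.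
Proof. by rewrite /rbsm_prefix take_oversize ?size_enum_ord. Qed.

Lemma rbsm_prefixS om t (tn : (t < n)%N) :
  rbsm_prefix om t.+1 = rbsm_step om (rbsm_prefix om t) (Ordinal tn).
Proof. by rewrite /rbsm_prefix take_enum_ordS foldl_rcons. Qed.

Lemma rbsm_prefix_adapted t om om' :
  (forall i : 'I_n, (i < t)%N -> om i = om' i) -> rbsm_prefix om t = rbsm_prefix om' t.
Proof.
elim: t => [|t IH] eq_om; first by rewrite /rbsm_prefix !take0.
have {}IH : rbsm_prefix om t = rbsm_prefix om' t.
  by apply: IH => i /ltnW; apply: eq_om.
have [tn | nt] := ltnP t n; first by rewrite !(rbsm_prefixS _ tn) IH /rbsm_step eq_om.
by move: IH; rewrite /rbsm_prefix !take_oversize ?size_enum_ord // leqW.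
Qed.

Definition good_at om (u : 'I_n) : bool :=
  good_decrement (rbsm_prefix om u).1 (str u).1 (om u).

Definition bad_at om (u : 'I_n) : bool :=
  bad_decrement (rbsm_prefix om u).1 (str u).1 (om u).

Lemma rbsm_prefix_potential om t : (t <= n)%N ->
  (k * count (good_at om) (take t (enum 'I_n)) + 8 * size (rbsm_prefix om t).1 <= 8 * t)%N.
Proof.
elim: t => [|t IH] tn; first by rewrite /rbsm_prefix take0 /= muln0.
have := rbsm_update_potential (rbsm_prefix om t).1
          (str (Ordinal tn)).1 (str (Ordinal tn)).2 (om (Ordinal tn)).
rewrite -surjective_pairing take_enum_ordS -cats1 count_cat rbsm_prefixS /=.
have := IH (ltnW tn); rewrite /good_at /=; lia.
Qed.

Lemma rbsm_prefix_cost om t : (t <= n)%N -> (rbsm_prefix om t).2 =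
  (t + (k + l) * (count (good_at om) (take t (enum 'I_n))
                  + count (bad_at om) (take t (enum 'I_n))))%N.
Proof.
elim: t => [|t IH] tn; first by rewrite /rbsm_prefix take0 /= muln0.
rewrite take_enum_ordS -cats1 !count_cat rbsm_prefixS /= IH 1?ltnW //.
rewrite [str _]surjective_pairing rbsm_update_cost /good_at /bad_at /= !mulnDr; lia.
Qed.

Lemma rbsm_cost_le om : (l <= 6 * k)%N ->
  (k * #|[set u | bad_at om u]| <= n)%N -> (rbsm_cost str om <= 64 * n)%N.
Proof.
move=> l_le; rewrite -count_enum rbsm_cost_prefix rbsm_prefix_cost //.
have := rbsm_prefix_potential om (leqnn n).
rewrite take_oversize ?size_enum_ord //.
set G := count _ _; set B := count _ _ => G_le B_le.
have lG : (l * G <= 6 * k * G)%N by rewrite leq_mul2r l_le orbT.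
have lB : (l * B <= 6 * k * B)%N by rewrite leq_mul2r l_le orbT.
lia.
Qed.

Lemma bad_at_adapted (t : 'I_n) om om' :
  (forall i : 'I_n, (i <= t)%N -> om i = om' i) -> bad_at om t = bad_at om' t.
Proof.
move=> eq_om; rewrite /bad_at eq_om // (rbsm_prefix_adapted (om' := om')) //.
by move=> i /ltnW; apply: eq_om.
Qed.

Lemma bad_at_sparse (t : 'I_n) om : (0 < l)%N ->
  (2 ^ l./2 * #|[set x | bad_at (ffun_upd om t x) t]| <= #|{ffun 'I_l -> 'I_k}|)%N.
Proof.
move=> l_gt0.
have prefix_upd x : rbsm_prefix (ffun_upd om t x) t = rbsm_prefix om t.
  by apply: rbsm_prefix_adapted => i it; rewrite ffun_upd_neq // -val_eqE neq_ltn it.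
rewrite card_ffun !card_ord.
apply: leq_trans (card_low_sample_median (counter (rbsm_prefix om t).1) l_gt0).
rewrite leq_mul2l subset_leq_card ?orbT //; apply/subsetP => x.
by rewrite !inE /bad_at prefix_upd ffun_upd_eq => /andP[].
Qed.

Lemma card_many_bad_at m : (0 < l)%N ->
  (2 ^ (l./2 * m) * #|[set om | m <= #|[set t | bad_at om t]|]| <= 'C(n, m) * #|Omega|)%N.
Proof.
move=> l_gt0; rewrite expnM.
apply: (card_many_bad (bad := fun t om => bad_at om t)) => [t om om' | t om].
  exact: bad_at_adapted.
exact: bad_at_sparse.
Qed.

End Run.

Definition sample_size (n k : nat) : nat :=
  maxn 1 (minn (6 * k) (8 * (trunc_log 2 n).+1)).

Lemma sample_size_bounds n k : (1 <= sample_size n k <= 8 * (trunc_log 2 n).+1)%N.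
Proof. by rewrite leq_maxl /= geq_max muln_gt0 geq_minr. Qed.

Lemma sample_sizeE n k : (0 < k)%N ->
  sample_size n k = minn (6 * k) (8 * (trunc_log 2 n).+1).
Proof. by move=> k_gt0; apply/maxn_idPr; rewrite leq_min !muln_gt0 k_gt0. Qed.

Lemma sample_size_le n k : (0 < k)%N -> (sample_size n k <= 6 * k)%N.
Proof. by move=> k_gt0; rewrite sample_sizeE // geq_minl. Qed.

(* The two regimes of the minimum: for small k the crude bound C(n, m) <= 2^n
   suffices, for large k one needs C(n, m) <= n^m with n < 2^(log n + 1). *)
Lemma mul_bin_le_exp_sample_size n k : (0 < k)%N ->
  (n * 'C(n, (n %/ k).+1) <= 2 ^ ((sample_size n k)./2 * (n %/ k).+1))%N.
Proof.
move=> k_gt0; rewrite sample_sizeE //.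
set L := (trunc_log 2 n).+1; set m := (n %/ k).+1.
have n_lt : (n < 2 ^ L)%N by apply: trunc_log_ltn.
have [k_small | k_large] := leqP (6 * k) (8 * L).
- have -> : ((6 * k)./2 = 3 * k)%N by lia.
  have n_lt_km : (n < k * m)%N by rewrite /m; lia.
  apply: (@leq_trans (2 ^ n * 2 ^ n)).
    exact: leq_mul (ltnW (ltn_expl _ _)) (bin_le_exp2 _ _).
  by rewrite -expnD leq_exp2l //; lia.
- have -> : ((8 * L)./2 = 4 * L)%N by lia.
  apply: (@leq_trans (n ^ m.+1)); first by rewrite expnS leq_mul2l bin_le_expn orbT.
  apply: (@leq_trans ((2 ^ L) ^ m.+1)); first by rewrite leq_exp2r // ltnW.
  have m_gt0 : (0 < m)%N by [].
  by rewrite -expnM leq_exp2l //; nia.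
Qed.

Lemma ratio_setC_le {R : numFieldType} (T : finType) (A B : {set T}) :
  (0 < #|T|)%N -> ~: A \subset B -> 1 - #|A|%:R / #|T|%:R <= #|B|%:R / #|T|%:R :> R.
Proof.
move=> T_gt0 /subset_leq_card le_AB.
have T_gt0' : 0 < #|T|%:R :> R by rewrite ltr0n.
rewrite -(ler_pM2r T_gt0') mulrBl mul1r !divfK ?gt_eqF // lerBlDl -natrD ler_nat.
by rewrite -(cardsC A) leq_add2l.
Qed.

Lemma bad_runs_rare (R : realFieldType) (k l n : nat) (str : 'I_n -> nat * R) m :
  (0 < l)%N -> (0 < m)%N -> (n * 'C(n, m) <= 2 ^ (l./2 * m))%N ->
  #|[set om : {ffun 'I_n -> {ffun 'I_l -> 'I_k}} | (m <= #|[set t | bad_at str om t]|)%N]|%:R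
    / #|{ffun 'I_n -> {ffun 'I_l -> 'I_k}}|%:R <= n%:R^-1 :> R.
Proof.
move=> l_gt0 m_gt0 n_bin_le; set Bad := [set om | _].
have [n0 | n_gt0] := posnP n.
  rewrite (_ : #|Bad| = 0%N) ?mul0r ?invr_ge0 ?ler0n //; apply: eq_card0 => om.
  rewrite inE; apply/negbTE; rewrite -ltnNge.
  by rewrite (leq_ltn_trans (max_card _)) // card_ord n0.
have [O0 | O_gt0] := posnP #|{ffun 'I_n -> {ffun 'I_l -> 'I_k}}|.
  by rewrite O0 invr0 mulr0 invr_ge0 ler0n.
have many := card_many_bad_at k str m l_gt0.
have n_Bad : (n * #|Bad| <= #|{ffun 'I_n -> {ffun 'I_l -> 'I_k}}|)%N.
  rewrite -(@leq_pmul2l (2 ^ (l./2 * m))) ?expn_gt0 // mulnCA.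
  apply: leq_trans (leq_mul (leqnn n) many) _.
  by rewrite mulnA leq_mul2r n_bin_le orbT.
rewrite ler_pdivrMr ?ltr0n // -(ler_pM2l (_ : 0 < n%:R :> R)) ?ltr0n //.
by rewrite mulrA mulfV ?pnatr_eq0 -?lt0n // mul1r -natrM ler_nat.
Qed.

Theorem theorem7 :
  exists (c C : nat) (ell : nat -> nat -> nat),
    (forall n k, (1 <= ell n k <= c * (trunc_log 2 n).+1)%N) /\
    forall (R : realFieldType) (k n : nat) (str : 'I_n -> nat * R),
      (1 <= k)%N -> (forall t, 0 < (str t).2) ->
      1 - n%:R^-1 <= prob_cost_le k (ell n k) C str.
Proof.
exists 8%N, 64%N, sample_size; split=> [n k | R k n str k_gt0 _].
  exact: sample_size_bounds.
set l := sample_size n k; set m := (n %/ k).+1.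
have l_gt0 : (0 < l)%N by case/andP: (sample_size_bounds n k).
pose Bad := [set om : {ffun 'I_n -> {ffun 'I_l -> 'I_k}} |
             (m <= #|[set t | bad_at str om t]|)%N].
have cheap : ~: Bad \subset [set om | (rbsm_cost str om <= 64 * n)%N].
  apply/subsetP => om; rewrite !inE -ltnNge ltnS => few_bad.
  apply: rbsm_cost_le; first exact: sample_size_le.
  by apply: leq_trans (leq_mul (leqnn k) few_bad) _; rewrite mulnC leq_divM.
have Omega_gt0 : (0 < #|{ffun 'I_n -> {ffun 'I_l -> 'I_k}}|)%N.
  by rewrite !card_ffun !card_ord !expn_gt0 k_gt0.
rewrite /prob_cost_le -/l; apply: le_trans _ (ratio_setC_le Omega_gt0 cheap).
rewrite lerD2l lerN2; apply: bad_runs_rare => //.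
exact: mul_bin_le_exp_sample_size.
Qed.
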